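(* Let $Q$ be a quadrilateral in $K^2$ and let $f:K^2\to K^2$ be an invertible linear transformation. There is $\lambda\in K$ such that for all $\mathbf v,\mathbf w\in K^2$, $$\langle \mathbf v,\mathbf w\rangle_Q=\lambda\langle f(\mathbf v),f(\mathbf w)\rangle_{f(Q)}.$$ Thus a pair of lines $\ell_1,\ell_2$ is $Q$-orthogonal if and only if $f(\ell_1),f(\ell_2)$ is $f(Q)$-orthogonal.
   Context: $K$ is a field of characteristic $\neq 2$. Every line $L$ in $K^2$ has an equation $tX-uY+v=0$ normalized so that $t=1$ if $u=0$ and $u=1$ if $u\neq 0$; coefficients denoted $t_L,u_L,v_L$. A quadrilateral $Q=ABA'B'$ consists of four distinct lines $A,B,A',B'$ (sides), not all through one point, with adjacent sides ($A,B$; $B,A'$; $A',B'$; $B',A$) not parallel; opposite sides may be parallel (three sides may be concurrent). $f(Q)$ denotes the quadrilateral $f(A)f(B)f(A')f(B')$. For $Q=ABA'B'$ let $\alpha=t_Au_Bu_{A'}u_{B'}-u_At_Bu_{A'}u_{B'}+u_Au_Bt_{A'}u_{B'}-u_Au_Bu_{A'}t_{B'}$, $\beta=t_Au_Bt_{A'}u_{B'}-u_At_Bu_{A'}t_{B'}$, $\gamma=t_At_Bt_{A'}u_{B'}-t_At_Bu_{A'}t_{B'}+t_Au_Bt_{A'}t_{B'}-u_At_Bt_{A'}t_{B'}$, and $\langle \mathbf v,\mathbf w\rangle_Q=\mathbf v^T\begin{pmatrix}\gamma&-\beta\\-\beta&\alpha\end{pmatrix}\mathbf w$. Lines $\ell_1,\ell_2$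 are $Q$-orthogonal if $\langle (u_{\ell_1},t_{\ell_1}),(u_{\ell_2},t_{\ell_2})\rangle_Q=0$. *)

From mathcomp Require Import all_boot all_algebra.
Set Implicit Arguments. Unset Strict Implicit. Unset Printing Implicit Defensive.
Import GRing.Theory.
Local Open Scope ring_scope.

Section Defs.
Variable K : fieldType.

(* A line  t X - u Y + v = 0, stored by its coefficients (t, u, v). *)
Record line := Line { lt : K; lu : K; lv : K }.

Definition normalized (L : line) : bool :=
  ((lu L == 0) && (lt L == 1)) || (lu L == 1).

Definition on_line (L : line) (p : K * K) : bool :=
  lt L * p.1 - lu L * p.2 + lv L == 0.

(* For normalized lines, parallel (or equal) iff same (t, u). *)
Definition parallel (L M : line) : bool :=
  (lt L == lt M) && (lu L == lu M).

Definition line_eqb (L M : line) : bool :=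
  [&& lt L == lt M, lu L == lu M & lv L == lv M].

Record quad := Quad { qA : line; qB : line; qA' : line; qB' : line }.

Definition is_quad (Q : quad) : Prop :=
  let A := qA Q in let B := qB Q in let A' := qA' Q in let B' := qB' Q in
  [/\ [&& normalized A, normalized B, normalized A' & normalized B'],
      [&& ~~ line_eqb A B, ~~ line_eqb A A', ~~ line_eqb A B', ~~ line_eqb B A',
          ~~ line_eqb B B' & ~~ line_eqb A' B'],
      ~ (exists p, [&& on_line A p, on_line B p, on_line A' p & on_line B' p]) &
      [&& ~~ parallel A B, ~~ parallel B A', ~~ parallel A' B' & ~~ parallel B' A]].

Definition alpha (Q : quad) : K :=
  let A := qA Q in let B := qB Q in let A' := qA' Q in let B' := qB' Q in
  lt A * lu B * lu A' * lu B' - lu A * lt B * lu A' * lu B'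
  + lu A * lu B * lt A' * lu B' - lu A * lu B * lu A' * lt B'.

Definition beta (Q : quad) : K :=
  let A := qA Q in let B := qB Q in let A' := qA' Q in let B' := qB' Q in
  lt A * lu B * lt A' * lu B' - lu A * lt B * lu A' * lt B'.

Definition gamma (Q : quad) : K :=
  let A := qA Q in let B := qB Q in let A' := qA' Q in let B' := qB' Q in
  lt A * lt B * lt A' * lu B' - lt A * lt B * lu A' * lt B'
  + lt A * lu B * lt A' * lt B' - lu A * lt B * lt A' * lt B'.

Definition qmx (Q : quad) : 'M[K]_2 :=
  \matrix_(i < 2, j < 2)
    (if i == j then (if i == 0 then gamma Q else alpha Q) else - beta Q).

Definition qform (Q : quad) (v w : 'cV[K]_2) : K :=
  (v^T *m qmx Q *m w) 0 0.

Definition ldir (L : line) : 'cV[K]_2 := \col_(i < 2) [:: lu L; lt L]`_i.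

Definition Qorth (Q : quad) (l1 l2 : line) : Prop :=
  qform Q (ldir l1) (ldir l2) = 0.

(* normalized line with equation t X - u Y + v = 0, assuming (t,u) <> 0 *)
Definition normalize (t u v : K) : line :=
  if u == 0 then Line 1 0 (v / t) else Line (t / u) 1 (v / u).

(* Image of L under the linear map p |-> F p (F invertible):
   the points q = F p with (t, -u) . p + v = 0, i.e. ((t, -u) F^-1) . q + v = 0. *)
Definition line_image (F : 'M[K]_2) (L : line) : line :=
  let r := (\row_(j < 2) [:: lt L; - lu L]`_j) *m invmx F in
  normalize (r 0 0) (- r 0 1) (lv L).

Definition quad_image (F : 'M[K]_2) (Q : quad) : quad :=
  Quad (line_image F (qA Q)) (line_image F (qB Q))
       (line_image F (qA' Q)) (line_image F (qB' Q)).

End Defs.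

From mathcomp Require Import all_boot all_algebra ring.
Set Implicit Arguments. Unset Strict Implicit. Unset Printing Implicit Defensive.
Import GRing.Theory.
Local Open Scope ring_scope.

(* Write [x, y] for the determinant of the columns x, y of K^2 and d_L = (u_L, t_L)
   for the direction of a line L.  Expanding alpha, beta, gamma gives
     <v, w>_Q = [v, d_A] [d_A', d_B] [d_B', w] + [w, d_A'] [d_A, d_B'] [d_B, v],
   while [f x, f y] = det f [x, y] and the image of a line L has direction a nonzero
   multiple of f d_L.  Hence <f v, f w>_f(Q) is <v, w>_Q times a nonzero multiple of
   (det f)^3. *)

Section Cross.
Variable R : comRingType.

Definition col2 (a b : R) : 'cV[R]_2 := \col_(i < 2) [:: a; b]`_i.

Definition cross (x y : 'cV[R]_2) : R := x 0 0 * y 1 0 - x 1 0 * y 0 0.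

Lemma sum_ord2 (G : 'I_2 -> R) : \sum_(i < 2) G i = G 0 + G 1.
Proof.
by rewrite !big_ord_recl big_ord0 addr0; congr (G _ + G _); apply: val_inj.
Qed.

Lemma det_mx22 (A : 'M[R]_2) : \det A = A 0 0 * A 1 1 - A 0 1 * A 1 0.
Proof.
rewrite (expand_det_row _ 0) !big_ord_recl big_ord0 /cofactor !det_mx11 !mxE /=.
rewrite expr0 expr1 mul1r mulN1r addr0 mulrN.
by congr (A _ _ * A _ _ - A _ _ * A _ _); apply: val_inj.
Qed.

Lemma col2_eta (x : 'cV[R]_2) : x = col2 (x 0 0) (x 1 0).
Proof.
apply/matrixP=> i j; rewrite (ord1 j) !mxE.
by case: i => [[|[|//]] ?] /=; congr (x _ _); apply: val_inj.
Qed.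

Lemma scale_col2 (c a b : R) : c *: col2 a b = col2 (c * a) (c * b).
Proof. by apply/matrixP=> i j; rewrite !mxE; case: i => [[|[|]]]. Qed.

Lemma col2_eq0 (a b : R) : (col2 a b == 0) = (a == 0) && (b == 0).
Proof.
apply/eqP/andP => [/matrixP e | [/eqP-> /eqP->]].
  by have := e 0 0; have := e 1 0; rewrite !mxE /= => -> ->.
by apply/matrixP=> i j; rewrite !mxE; case: i => [[|[|]]].
Qed.

Lemma crossZl (c : R) (x y : 'cV[R]_2) : cross (c *: x) y = c * cross x y.
Proof. by rewrite /cross !mxE; ring. Qed.

Lemma crossZr (c : R) (x y : 'cV[R]_2) : cross x (c *: y) = c * cross x y.
Proof. by rewrite /cross !mxE; ring. Qed.

Lemma cross_mulmx (A : 'M[R]_2) x y : cross (A *m x) (A *m y) = \det A * cross x y.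
Proof. by rewrite /cross det_mx22 !mxE !sum_ord2; ring. Qed.

Lemma eq_from_cross (y z : 'cV[R]_2) : (forall x, cross x y = cross x z) -> y = z.
Proof.
move=> e; rewrite [y]col2_eta [z]col2_eta.
have := e (col2 1 0); have := e (col2 0 1); rewrite /cross !mxE /=.
by rewrite !mul0r !mul1r !sub0r !subr0 => /oppr_inj-> ->.
Qed.

Lemma cross_col2_row (r : 'rV[R]_2) x : cross x (col2 (- r 0 1) (r 0 0)) = (r *m x) 0 0.
Proof. by rewrite /cross !mxE sum_ord2 /=; ring. Qed.

End Cross.

Section LineImage.
Variable K : fieldType.

Lemma ldir_neq0 (L : line K) : normalized L -> ldir L != 0.
Proof.
by rewrite -[ldir L]/(col2 _ _) col2_eq0 => /orP[/andP[-> /eqP->] | /eqP->];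
  rewrite oner_eq0 ?andbF.
Qed.

Lemma ldir_normalize (t u v : K) :
  col2 u t != 0 -> exists2 c, c != 0 & ldir (normalize t u v) = c *: col2 u t.
Proof.
rewrite /normalize col2_eq0; case: eqP => [-> /= t0 | /eqP u0 _].
  by exists t^-1; rewrite ?invr_eq0 // scale_col2 mulr0 mulVf.
by exists u^-1; rewrite ?invr_eq0 // scale_col2 mulVf // mulrC.
Qed.

Lemma row_normal_mulmx (L : line K) x :
  ((\row_(j < 2) [:: lt L; - lu L]`_j) *m x) 0 0 = cross x (ldir L).
Proof. by rewrite /cross !mxE sum_ord2 !mxE /=; ring. Qed.

Lemma ldir_line_image (F : 'M[K]_2) (L : line K) :
  F \in unitmx -> ldir L != 0 ->
  exists2 s, s != 0 & ldir (line_image F L) = s *: (F *m ldir L).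
Proof.
move=> uF nzL; rewrite /line_image; set r := _ *m invmx F.
(* (t, -u) is a normal of L, and it is transformed by invmx F; turning it back
   into a direction replaces invmx F by its adjugate, i.e. by \det (invmx F) *: F. *)
have perp_r : col2 (- r 0 1) (r 0 0) = \det (invmx F) *: (F *m ldir L).
  apply: eq_from_cross => x.
  rewrite crossZr cross_col2_row -mulmxA row_normal_mulmx.
  by rewrite -{1}[ldir L](mulKmx uF) cross_mulmx.
have detV0 : \det (invmx F) != 0 by rewrite -unitfE -unitmxE unitmx_inv.
have nzFL : F *m ldir L != 0.
  by apply: contraNneq nzL => e; rewrite -(mulKmx uF (ldir L)) e mulmx0.
have [|c c0 ->] := ldir_normalize (lv L) (_ : col2 (- r 0 1) (r 0 0) != 0).
  by rewrite perp_r scaler_eq0 negb_or detV0.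
by exists (c * \det (invmx F)); rewrite ?mulf_neq0 // perp_r scalerA.
Qed.

End LineImage.

Section QuadForm.
Variable K : fieldType.
Implicit Types (Q : quad K) (v w : 'cV[K]_2).

Lemma qformE Q v w :
  qform Q v w =
    cross v (ldir (qA Q)) * cross (ldir (qA' Q)) (ldir (qB Q)) * cross (ldir (qB' Q)) w
  + cross w (ldir (qA' Q)) * cross (ldir (qA Q)) (ldir (qB' Q)) * cross (ldir (qB Q)) v.
Proof.
rewrite /qform /cross !mxE !sum_ord2 !mxE !sum_ord2 !mxE /= /alpha /beta /gamma.
ring.
Qed.

Lemma qformZ Q (a b : K) v w : qform Q (a *: v) (b *: w) = a * b * qform Q v w.
Proof. by rewrite !qformE !crossZl !crossZr; ring. Qed.

Lemma qform_quad_image Q (F : 'M[K]_2) :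
  F \in unitmx ->
  ldir (qA Q) != 0 -> ldir (qB Q) != 0 -> ldir (qA' Q) != 0 -> ldir (qB' Q) != 0 ->
  exists2 mu, mu != 0 &
    forall v w, qform (quad_image F Q) (F *m v) (F *m w) = mu * qform Q v w.
Proof.
move=> uF /(ldir_line_image uF) [a a0 eA] /(ldir_line_image uF) [b b0 eB].
move=> /(ldir_line_image uF) [a' a'0 eA'] /(ldir_line_image uF) [b' b'0 eB'].
have detF0 : \det F != 0 by rewrite -unitfE -unitmxE.
exists (a * b * a' * b' * \det F ^+ 3); first by rewrite !mulf_neq0 ?expf_neq0.
move=> v w; rewrite !qformE /= eA eB eA' eB' !crossZl !crossZr !cross_mulmx.
ring.
Qed.

End QuadForm.

Theorem proposition2p8 (K : fieldType) (char2 : (2%:R : K) != 0)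
    (Q : quad K) (F : 'M[K]_2) :
  is_quad Q -> F \in unitmx ->
  (exists lam : K, forall v w : 'cV[K]_2,
      qform Q v w = lam * qform (quad_image F Q) (F *m v) (F *m w))
  /\
  (forall l1 l2 : line K, normalized l1 -> normalized l2 ->
      (Qorth Q l1 l2 <->
       Qorth (quad_image F Q) (line_image F l1) (line_image F l2))).
Proof.
case=> /and4P[nA nB nA' nB'] _ _ _ uF.
have [mu mu0 covariant] :=
  qform_quad_image uF (ldir_neq0 nA) (ldir_neq0 nB) (ldir_neq0 nA') (ldir_neq0 nB').
split=> [|l1 l2 n1 n2].
  by exists mu^-1 => v w; rewrite covariant mulKf.
rewrite /Qorth.
have [s1 s10 ->] := ldir_line_image uF (ldir_neq0 n1).
have [s2 s20 ->] := ldir_line_image uF (ldir_neq0 n2).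
rewrite qformZ covariant.
split=> [->|/eqP]; first by rewrite !mulr0.
by rewrite !mulf_eq0 (negbTE s10) (negbTE s20) (negbTE mu0) => /eqP.
Qed.
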